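(* Let $F,\theta \geq 1$ be integers with $F > 2\theta$. For $\rho \in [0,2^{-F})$, let $\eta_0(x)$, $\eta_0(x+1)$ be independent random elements of $\{0,1\}^F$, each with $P(\eta_0 = u) = 1/2 - (2^{F-1}-1)\rho$ for $u \in \{u_-,u_+\}$ and $P(\eta_0 = u) = \rho$ otherwise, where $u_- = (0,\ldots,0)$, $u_+ = (1,\ldots,1)$. Let $\zeta = H(\eta_0(x),\eta_0(x+1))$ and $\phi = -\zeta$ if $\zeta \leq \theta$, $\phi = \zeta - 2\theta$ if $\zeta > \theta$. Then there exists $\rho_0 > 0$ such that $E\phi > 0$ for all $\rho \in (0,\rho_0)$.
   Context: $H(u,v) = \#\{i : u_i \neq v_i\}$ denotes the Hamming distance on $\{0,1\}^F$. *)

From mathcomp Require Import all_boot all_order all_algebra.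
Set Implicit Arguments. Unset Strict Implicit. Unset Printing Implicit Defensive.
Import Order.TTheory GRing.Theory Num.Theory.
Local Open Scope ring_scope.

Definition cube (F : nat) := {ffun 'I_F -> bool}.

Definition hamming (F : nat) (u v : cube F) : nat := #|[set i | u i != v i]|.

Definition u_minus (F : nat) : cube F := [ffun _ => false].
Definition u_plus (F : nat) : cube F := [ffun _ => true].

Definition pmf (R : fieldType) (F : nat) (rho : R) (u : cube F) : R :=
  if (u == u_minus F) || (u == u_plus F)
  then (2 : R)^-1 - ((2 ^ (F.-1) - 1)%N)%:R * rho
  else rho.

Definition phi (R : fieldType) (theta zeta : nat) : R :=
  if (zeta <= theta)%N then - (zeta%:R) else zeta%:R - (2 * theta)%:R.

Definition Ephi (R : fieldType) (F theta : nat) (rho : R) : R :=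
  \sum_(u : cube F) \sum_(v : cube F)
     pmf rho u * pmf rho v * phi R theta (hamming u v).

From mathcomp Require Import all_boot all_order all_algebra.
From mathcomp Require Import ring lra.
Import Order.TTheory GRing.Theory Num.Theory.
Local Open Scope ring_scope.

(* At [rho = 0] the law of [eta_0] is uniform on [{u_-, u_+}], so [zeta] is
   [0] or [F] with probability [1/2] each and [E phi = (F - 2 theta) / 2 > 0].
   Since [pmf] is affine in [rho], [E phi] is a quadratic polynomial in [rho],
   and a polynomial with positive constant term stays positive near [0]. *)

Lemma quadratic_gt0_near0 (R : realFieldType) (a b c : R) : 0 < a ->
  exists r0 : R, 0 < r0 /\
    forall r : R, 0 < r -> r < r0 -> 0 < a + r * b + r ^+ 2 * c.
Proof.
move=> a_gt0; set M : R := `|b| + `|c| + 1.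
have M_gt0 : 0 < M by rewrite /M; have := normr_ge0 b; have := normr_ge0 c; lra.
exists (Num.min 1 (a / M)); split; first by rewrite lt_min ltr01 divr_gt0.
move=> r r_gt0; rewrite lt_min => /andP[r_lt1 r_small].
have rM_lt_a : r * M < a by rewrite -ltr_pdivlMr.
have b_ge : r * - `|b| <= r * b by apply: ler_wpM2l; [exact: ltW | exact: lerNnormlW].
have c_ge : r ^+ 2 * - `|c| <= r ^+ 2 * c.
  by apply: ler_wpM2l; [exact/exprn_ge0/ltW | exact: lerNnormlW].
have r2_le_r : r ^+ 2 * `|c| <= r * `|c| by rewrite ler_wpM2r // expr2 ger_pMr // ltW.
rewrite /M in rM_lt_a; lra.
Qed.

Lemma hammingC (F : nat) (u v : cube F) : hamming u v = hamming v u.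
Proof. by apply: eq_card => i; rewrite !inE eq_sym. Qed.

Lemma hamming_refl (F : nat) (u : cube F) : hamming u u = 0%N.
Proof. by apply/eqP; rewrite cards_eq0; apply/eqP/setP => i; rewrite !inE eqxx. Qed.

Lemma hamming_minus_plus (F : nat) : hamming (u_minus F) (u_plus F) = F.
Proof.
rewrite /hamming -[RHS]card_ord; apply: eq_card => i.
by rewrite !inE !ffunE.
Qed.

Lemma u_plus_neq_minus (F : nat) : (0 < F)%N -> u_plus F != u_minus F.
Proof. by move=> F_gt0; apply/eqP => /ffunP /(_ (Ordinal F_gt0)); rewrite !ffunE. Qed.

Lemma phi0 (R : fieldType) (theta : nat) : phi R theta 0 = 0.
Proof. by rewrite /phi leq0n oppr0. Qed.

Lemma phi_gt (R : numFieldType) (theta zeta : nat) :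
  (2 * theta < zeta)%N -> phi R theta zeta = zeta%:R - (2 * theta)%:R.
Proof.
move=> lt_zeta; rewrite /phi ifN // -ltnNge.
by apply: leq_ltn_trans lt_zeta; rewrite leq_pmull.
Qed.

Section ExpectationAsPolynomial.
Variables (R : realFieldType) (F theta : nat).

Definition extremal (u : cube F) := (u == u_minus F) || (u == u_plus F).
Definition pmf_at0 (u : cube F) : R := if extremal u then 2^-1 else 0.
Definition pmf_slope (u : cube F) : R :=
  if extremal u then - ((2 ^ F.-1 - 1)%N)%:R else 1.

Lemma pmfE (rho : R) u : pmf rho u = pmf_at0 u + rho * pmf_slope u.
Proof. by rewrite /pmf /pmf_at0 /pmf_slope -/(extremal u); case: extremal; ring. Qed.

Definition Ephi_coef (p q : cube F -> R) : R :=
  \sum_u \sum_v p u * q v * phi R theta (hamming u v).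

Lemma EphiE (rho : R) : Ephi F theta rho =
  Ephi_coef pmf_at0 pmf_at0
  + rho * (Ephi_coef pmf_at0 pmf_slope + Ephi_coef pmf_slope pmf_at0)
  + rho ^+ 2 * Ephi_coef pmf_slope pmf_slope.
Proof.
rewrite /Ephi /Ephi_coef mulrDr !mulr_sumr -!big_split; apply: eq_bigr => u _.
rewrite !mulr_sumr -!big_split; apply: eq_bigr => v _.
rewrite !pmfE /=; ring.
Qed.

Hypothesis F_gt0 : (0 < F)%N.

Lemma sum_pmf_at0 (X : cube F -> R) :
  \sum_u pmf_at0 u * X u = 2^-1 * (X (u_minus F) + X (u_plus F)).
Proof.
rewrite (bigD1 (u_minus F)) //= (bigD1 (u_plus F)) ?u_plus_neq_minus //=.
rewrite big1 => [|u /andP[/negbTE nplus /negbTE nminus]].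
  by rewrite /pmf_at0 /extremal !eqxx orbT addr0 mulrDr.
by rewrite /pmf_at0 /extremal nplus nminus mul0r.
Qed.

Lemma Ephi_at0 :
  Ephi_coef pmf_at0 pmf_at0 = 2^-1 * phi R theta F.
Proof.
rewrite /Ephi_coef.
under eq_bigr => u _ do under eq_bigr => v _ do rewrite -mulrA.
under eq_bigr => u _ do rewrite -mulr_sumr.
rewrite !sum_pmf_at0 !hamming_refl hamming_minus_plus hammingC hamming_minus_plus.
by rewrite phi0; lra.
Qed.

End ExpectationAsPolynomial.

Theorem lemma10 (R : realFieldType) (F theta : nat) :
  (1 <= F)%N -> (1 <= theta)%N -> (2 * theta < F)%N ->
  exists rho0 : R, 0 < rho0 /\
    forall rho : R, 0 < rho -> rho < rho0 -> rho < ((2 ^ F)%N%:R)^-1 ->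
      0 < Ephi F theta rho.
Proof.
move=> F_gt0 _ lt_F.
have a_gt0 : 0 < 2^-1 * phi R theta F.
  by rewrite phi_gt // mulr_gt0 ?invr_gt0 ?ltr0n // subr_gt0 ltr_nat.
rewrite -(@Ephi_at0 R F theta F_gt0) in a_gt0.
set coef := Ephi_coef R F theta in a_gt0.
have [rho0 [rho0_gt0 near0]] := quadratic_gt0_near0 _ _
  (coef (pmf_at0 R F) (pmf_slope R F) + coef (pmf_slope R F) (pmf_at0 R F))
  (coef (pmf_slope R F) (pmf_slope R F)) a_gt0.
exists rho0; split => // rho rho_gt0 rho_lt _.
by rewrite EphiE; apply: near0.
Qed.
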